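(* Let $(\mathbf Z_n,\mathbf A_{n\times n})$ be generated from the stochastic block model with parameters $(\pi,\rho_nS)$, with $n\rho_n\to\infty$; let $\alpha>0$, $0<\delta<s_{\min}/2$, and suppose $n\rho_n>\frac{4s_{\max}}{\alpha^2\delta^2}$. Then \[ \frac{o_{ab}(\mathbf e_n)}{\rho_n\,n_{ab}(\mathbf e_n)}\in(s_{\min}-\delta,\ s_{\max}+\delta) \] simultaneously for all $a,b\in[k]$ and all $\mathbf e_n\in[k]^n$ satisfying $n_a(\mathbf e_n)\ge\alpha n$ for all $a$, eventually almost surely as $n\to\infty$.
   Context: SBM with parameters $(\pi,\rho_nS)$: $k\ge2$ fixed; $\pi$ a probability vector on $[k]$ with all $\pi_a>0$; $S$ a fixed symmetric $k\times k$ matrix with strictly positive entries and no two identical columns, $s_{\min},s_{\max}$ its minimal and maximal entries; $\rho_n\to0$. $\mathbf Z_n$ i.i.d. with law $\pi$; given $\mathbf Z_n=\mathbf z_n$, $\mathbf A_{n\times n}$ symmetric, zero diagonal, $A_{ij}$ ($i<j$) independent Bernoulli$(\rho_nS_{z_iz_j})$. For $\mathbf e_n\in[k]^n$: $n_a(\mathbf e_n)=\#\{i:e_i=a\}$; $n_{ab}=n_an_b$ ($a\ne b$), $n_{aa}=n_a(n_a-1)$; $o_{ab}(\mathbf e_n)=\sum_{i,j}\mathbf 1\{e_i=a,e_j=b\}A_{ij}$. *)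

From HB Require Import structures.
From mathcomp Require Import all_boot all_order all_algebra.
From mathcomp Require Import all_classical all_reals all_analysis.
Set Implicit Arguments. Unset Strict Implicit. Unset Printing Implicit Defensive.
Import Order.TTheory GRing.Theory Num.Theory.
Local Open Scope ring_scope.

(* Community labels are [k] = 'I_k; a label vector e_n in [k]^n is {ffun 'I_n -> 'I_k};
   an adjacency matrix is a boolean n x n matrix. *)

Definition is_min_entry (R : realType) (k : nat) (S : 'I_k -> 'I_k -> R) (s : R) :=
  (forall a b, s <= S a b) /\ (exists a b, S a b = s).
Definition is_max_entry (R : realType) (k : nat) (S : 'I_k -> 'I_k -> R) (s : R) :=
  (forall a b, S a b <= s) /\ (exists a b, S a b = s).

Definition ncount (n k : nat) (e : {ffun 'I_n -> 'I_k}) (a : 'I_k) : nat :=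
  #|[set i | e i == a]|.

Definition npair (n k : nat) (e : {ffun 'I_n -> 'I_k}) (a b : 'I_k) : nat :=
  if a == b then (ncount e a * (ncount e a).-1)%N else (ncount e a * ncount e b)%N.

Definition ocount (n k : nat) (A : 'M[bool]_n) (e : {ffun 'I_n -> 'I_k}) (a b : 'I_k) : nat :=
  (\sum_(i < n) \sum_(j < n) ((e i == a) && (e j == b) && A i j))%N.

(* Probability mass function of the SBM with parameters (pi, rho S) at (z, A):
   Z_i iid ~ pi; A symmetric with zero diagonal and, given Z = z,
   A_ij (i<j) independent Bernoulli(rho S_{z_i z_j}). *)
Definition sbm_pmf (R : realType) (n k : nat) (pi : 'I_k -> R) (rho : R)
    (S : 'I_k -> 'I_k -> R) (z : {ffun 'I_n -> 'I_k}) (A : 'M[bool]_n) : R :=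
  (\prod_(i < n) pi (z i)) *
  (if [forall i, forall j, A i j == A j i] && [forall i, ~~ A i i] then
     \prod_(i < n) \prod_(j < n | (i < j)%N)
        (if A i j then rho * S (z i) (z j) else 1 - rho * S (z i) (z j))
   else 0).

From HB Require Import structures.
From mathcomp Require Import all_boot all_order all_algebra.
From mathcomp Require Import ring lra.
From mathcomp Require Import all_classical all_reals all_analysis.
Set Implicit Arguments. Unset Strict Implicit. Unset Printing Implicit Defensive.
Import Order.TTheory GRing.Theory Num.Theory.
Import numFieldNormedType.Exports.
Local Open Scope classical_set_scope.
Local Open Scope ring_scope.

(* Conditionally on the labels z, the count o_ab(e) is a weighted sum
   sum_(i<j) w_ij A_ij of independent Bernoulli(rho S_(z_i z_j)) entries with
   weights w_ij in {0,1,2} summing to n_ab(e) >= (alpha n)^2 / 2.  Bounding the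
   indicator of a deviation by (1+u)^(+/-(Y - threshold)) and the moment
   generating function by exp (sum p_ij ((1+u)^w_ij - 1)) gives a two-sided
   Chernoff bound 2 exp (- c rho n^2), uniformly in z.  A union bound over the
   k^(n+2) triples (e, a, b) costs only exp (O(n)), which is beaten because
   n rho_n --> +oo; the resulting probabilities are summable and Borel-Cantelli
   concludes. *)

Lemma big_pairE (R : Type) (idx : R) (op : Monoid.com_law idx) (I J : finType)
    (F : I * J -> R) :
  \big[op/idx]_q F q = \big[op/idx]_i \big[op/idx]_j F (i, j).
Proof. by rewrite pair_bigA; apply: eq_bigr => -[]. Qed.

Section adjacency_law.
Variables (R : realType) (n : nat).

Definition is_adjacency (M : 'M[bool]_n) : bool :=
  [forall i, forall j, M i j == M j i] && [forall i, ~~ M i i].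

Definition edge_pmf (p : 'I_n -> 'I_n -> R) (M : 'M[bool]_n) : R :=
  if is_adjacency M then
    \prod_(i < n) \prod_(j < n | (i < j)%N) (if M i j then p i j else 1 - p i j)
  else 0.

Lemma edge_pmf_ge0 (p : 'I_n -> 'I_n -> R) (M : 'M[bool]_n) :
  (forall i j, 0 <= p i j <= 1) -> 0 <= edge_pmf p M.
Proof.
move=> p01; rewrite /edge_pmf; case: ifP => // _.
apply: prodr_ge0 => i _; apply: prodr_ge0 => j _.
by have /andP[p_ge0 p_le1] := p01 i j; case: (M i j); rewrite ?subr_ge0.
Qed.

Definition upper_triangle (M : 'M[bool]_n) : {ffun 'I_n * 'I_n -> bool} :=
  [ffun q : 'I_n * 'I_n => (q.1 < q.2)%N && M q.1 q.2].

Lemma upper_triangle_inj : {in [pred M | is_adjacency M] &, injective upper_triangle}.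
Proof.
move=> M1 M2; rewrite !inE => /andP[/forallP sym1 /forallP diag1].
move=> /andP[/forallP sym2 /forallP diag2] /ffunP eq12.
apply/matrixP => i j; case: (ltngtP i j) => [lt_ij|gt_ij|/val_inj <-].
- by have := eq12 (i, j); rewrite !ffunE /= lt_ij.
- have := eq12 (j, i); rewrite !ffunE /= gt_ij /= => eq_ji.
  by rewrite (eqP (forallP (sym1 i) j)) (eqP (forallP (sym2 i) j)).
- by rewrite (negbTE (diag1 i)) (negbTE (diag2 i)).
Qed.

Lemma sum_upper_triangle_le (Phi : {ffun 'I_n * 'I_n -> bool} -> R) :
  (forall h, 0 <= Phi h) ->
  \sum_(M | is_adjacency M) Phi (upper_triangle M) <= \sum_h Phi h.
Proof.
move=> Phi_ge0.
rewrite (eq_bigl [in [pred M | is_adjacency M]]) -?(big_imset _ upper_triangle_inj) //.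
rewrite [leRHS](bigID [in upper_triangle @: [pred M | is_adjacency M]]) /=.
by rewrite lerDl sumr_ge0.
Qed.

(* Independence of the upper-triangular entries: the moment generating function
   of a weighted edge count factorizes, and [1 + t <= exp t] bounds each factor. *)
Lemma edge_pmf_mgf_le (p : 'I_n -> 'I_n -> R) (w : 'I_n -> 'I_n -> nat) (x : R) :
  0 <= x -> (forall i j, 0 <= p i j <= 1) ->
  \sum_M edge_pmf p M * x ^+ (\sum_(i < n) \sum_(j < n | (i < j)%N) w i j * M i j)%N
  <= expR (\sum_(i < n) \sum_(j < n)
             (if (i < j)%N then p i j * (x ^+ w i j - 1) else 0)).
Proof.
move=> x_ge0 p01.
pose phi (q : 'I_n * 'I_n) (b : bool) : R :=
  if (q.1 < q.2)%N then (if b then p q.1 q.2 * x ^+ w q.1 q.2 else 1 - p q.1 q.2)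
  else (if b then 0 else 1).
have phi_ge0 q b : 0 <= phi q b.
  rewrite /phi; have /andP[p_ge0 p_le1] := p01 q.1 q.2.
  by case: ifP; case: b => //; rewrite ?subr_ge0 ?mulr_ge0 ?exprn_ge0.
pose Phi (h : {ffun 'I_n * 'I_n -> bool}) := \prod_q phi q (h q).
have -> : \sum_M edge_pmf p M *
            x ^+ (\sum_(i < n) \sum_(j < n | (i < j)%N) w i j * M i j)%N
          = \sum_(M | is_adjacency M) Phi (upper_triangle M).
  rewrite [RHS]big_mkcond /=; apply: eq_bigr => M _; rewrite /edge_pmf.
  case: ifP => _; last by rewrite mul0r.
  rewrite expr_sum -big_split /= /Phi big_pairE.
  apply: eq_bigr => i _; rewrite expr_sum -big_split /= [LHS]big_mkcond /=.
  apply: eq_bigr => j _; rewrite /phi ffunE /=.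
  by case: ifP => // _; case: (M i j); rewrite ?muln1 ?muln0 ?expr0 ?mulr1.
have Phi_ge0 h : 0 <= Phi h by apply: prodr_ge0 => q _; apply: phi_ge0.
apply: le_trans (sum_upper_triangle_le Phi_ge0) _.
rewrite /Phi -(bigA_distr_bigA phi) /= expR_sum big_pairE.
apply: ler_prod => i _; apply/andP; split.
  by apply: prodr_ge0 => j _; apply: sumr_ge0 => b _; apply: phi_ge0.
rewrite expR_sum; apply: ler_prod => j _; apply/andP; split.
  by apply: sumr_ge0 => b _; apply: phi_ge0.
rewrite big_bool /phi /=; case: ifP => _; last by rewrite expR0 add0r.
rewrite [leLHS](_ : _ = 1 + p i j * (x ^+ w i j - 1)); last by ring.
exact: expR_ge1Dx.
Qed.

End adjacency_law.

Section block_counts.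
Variables (n k : nat).
Implicit Types (e : {ffun 'I_n -> 'I_k}) (a b : 'I_k).

Lemma sum_upper_pairs (g : 'I_n -> 'I_n -> nat) : (forall i, g i i = 0) ->
  (\sum_(i < n) \sum_(j < n) g i j
   = \sum_(i < n) \sum_(j < n | (i < j)%N) (g i j + g j i))%N.
Proof.
move=> g_diag.
have split_row i : (\sum_(j < n) g i j
    = \sum_(j < n | (i < j)%N) g i j + \sum_(j < n | (j < i)%N) g i j)%N.
  rewrite (bigID (fun j : 'I_n => (i < j)%N)) /=; congr (_ + _)%N.
  rewrite big_mkcond [RHS]big_mkcond; apply: eq_bigr => j _ /=.
  case: (ltngtP i j) => //= eq_ij.
  by rewrite (val_inj eq_ij) g_diag.
under eq_bigr do rewrite split_row.
rewrite big_split /=.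
have -> : (\sum_(i < n) \sum_(j < n | (j < i)%N) g i j
           = \sum_(i < n) \sum_(j < n | (i < j)%N) g j i)%N.
  under eq_bigr do rewrite big_mkcond.
  by rewrite exchange_big; apply: eq_bigr => i _; rewrite [RHS]big_mkcond.
by rewrite -big_split; apply: eq_bigr => i _; rewrite -big_split.
Qed.

Lemma ncountE e a : ncount e a = (\sum_(i < n) (e i == a))%N.
Proof.
rewrite /ncount -sum1_card big_mkcond /=; apply: eq_bigr => i _.
by rewrite inE; case: (e i == a).
Qed.

Lemma npairE e a b :
  npair e a b = (\sum_(i < n) \sum_(j < n) (((e i == a) && (e j == b)) * (i != j)))%N.
Proof.
have all_pairs : (\sum_(i < n) \sum_(j < n) ((e i == a) && (e j == b) : nat)
                  = ncount e a * ncount e b)%N.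
  rewrite !ncountE big_distrl /=; apply: eq_bigr => i _.
  rewrite big_distrr /=; apply: eq_bigr => j _.
  by case: (e i == a); case: (e j == b).
have split_diag : (\sum_(i < n) \sum_(j < n) ((e i == a) && (e j == b) : nat)
    = \sum_(i < n) \sum_(j < n) (((e i == a) && (e j == b)) * (i != j))
      + \sum_(i < n) ((e i == a) && (e i == b) : nat))%N.
  rewrite -big_split /=; apply: eq_bigr => i _.
  rewrite (bigD1 i) //= [X in _ = (X + _)%N](bigD1 i) //= eqxx muln0 add0n addnC.
  congr (_ + _)%N; apply: eq_bigr => j neq_ji.
  by rewrite [i == j]eq_sym neq_ji muln1.
have diagE : (\sum_(i < n) ((e i == a) && (e i == b) : nat)
              = if a == b then ncount e a else 0)%N.
  case: eqP => [<-|neq_ab].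
    by rewrite ncountE; apply: eq_bigr => i _; rewrite andbb.
  by rewrite big1 // => i _; case: eqP => // ->; case: eqP.
rewrite /npair; move: split_diag; rewrite all_pairs diagE.
case: eqP => [<- sq_split|_ ->]; last by rewrite addn0.
by rewrite -subn1 mulnBr muln1 sq_split addnK.
Qed.

Definition pair_weight e a b (i j : 'I_n) : nat :=
  ((e i == a) && (e j == b)) + ((e j == a) && (e i == b)).

Lemma pair_weight_le2 e a b i j : (pair_weight e a b i j <= 2)%N.
Proof. by rewrite /pair_weight; case: (_ && _); case: (_ && _). Qed.

Lemma ocount_upperE (M : 'M[bool]_n) e a b : is_adjacency M ->
  ocount M e a b = (\sum_(i < n) \sum_(j < n | (i < j)%N) pair_weight e a b i j * M i j)%N.
Proof.
move=> /andP[/forallP M_sym /forallP M_diag].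
rewrite /ocount sum_upper_pairs; last by move=> i; rewrite (negbTE (M_diag i)) andbF.
apply: eq_bigr => i _; apply: eq_bigr => j _.
rewrite /pair_weight -(eqP (forallP (M_sym i) j)).
by case: (M i j); rewrite ?andbT ?andbF ?muln1 ?muln0.
Qed.

Lemma sum_pair_weight e a b :
  (\sum_(i < n) \sum_(j < n | (i < j)%N) pair_weight e a b i j)%N = npair e a b.
Proof.
rewrite npairE sum_upper_pairs; last by move=> i; rewrite eqxx muln0.
apply: eq_bigr => i _; apply: eq_bigr => j lt_ij.
have neq_ij : (i == j) = false by rewrite -val_eqE ltn_eqF.
by rewrite /pair_weight [j == i]eq_sym neq_ij !muln1.
Qed.

End block_counts.

(* Smallness conditions on [u], where [1 + u] is the base of the exponential
   moments, making both Chernoff exponents at most [- u dl / 2]. *)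
Definition chernoff_rate (R : realFieldType) (slo shi dl u : R) :=
  [/\ 0 < u, u <= 1 / 2, u * (5 * shi + dl) <= dl & 4 * u * slo <= dl].

Lemma chernoff_rate_exists (R : realFieldType) (slo shi dl : R) :
  0 < slo -> slo <= shi -> 0 < dl -> exists u, chernoff_rate slo shi dl u.
Proof.
move=> slo_gt0 slo_le_shi dl_gt0; pose D := 8 * shi + 2 * dl + 2.
have D_gt0 : 0 < D by rewrite /D; lra.
have le_dlD c : c <= D -> dl / D * c <= dl.
  move=> c_le; apply: le_trans (_ : dl / D * c <= dl / D * D) _.
    by rewrite ler_wpM2l // divr_ge0 // ltW.
  by rewrite divfK // gt_eqF.
exists (dl / D); split.
- exact: divr_gt0.
- by rewrite ler_pdivrMr // /D; lra.
- by apply: le_dlD; rewrite /D; lra.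
- rewrite (_ : 4 * (dl / D) * slo = dl / D * (4 * slo)); last by ring.
  by apply: le_dlD; rewrite /D; lra.
Qed.

Lemma ln1D_bounds (R : realType) (u : R) : 0 < u ->
  [/\ 0 <= ln (1 + u), ln (1 + u) <= u & u <= ln (1 + u) * (1 + u)].
Proof.
move=> u_gt0; have u1_gt0 : 0 < 1 + u by lra.
split; first (by apply: ln_ge0; lra); first by apply: le_ln1Dx; lra.
have lt_u1 : u / (1 + u) < 1 by rewrite ltr_pdivrMr // mul1r; lra.
have := @le_ln1Dx R (- (u / (1 + u))) ltac:(lra).
have -> : 1 + - (u / (1 + u)) = (1 + u)^-1 by field; rewrite gt_eqF.
by rewrite lnV ?posrE // lerN2 -ler_pdivrMr.
Qed.

Lemma expr1D_sub1_le (R : realFieldType) (u : R) (m : nat) : 0 <= u -> (m <= 2)%N ->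
  (1 + u) ^+ m - 1 <= m%:R * (u + u ^+ 2).
Proof.
move=> u_ge0; case: m => [|[|[|m]]] // _.
- by rewrite expr0 subrr mul0r.
- by rewrite expr1 mul1r; nra.
- by rewrite expr2; nra.
Qed.

Lemma exprV1D_sub1_le (R : realFieldType) (u : R) (m : nat) : 0 <= u -> (m <= 2)%N ->
  (1 + u)^-1 ^+ m - 1 <= m%:R * (- (u - 2 * u ^+ 2)).
Proof.
move=> u_ge0; have u1_gt0 : 0 < 1 + u by lra.
case: m => [|[|[|m]]] // _.
- by rewrite expr0 subrr mul0r.
- by rewrite expr1 mul1r lerBlDr -div1r ler_pdivrMr //; nra.
- rewrite expr2 -invrM ?unitfE ?gt_eqF // lerBlDr -div1r ler_pdivrMr ?mulr_gt0 //.
  by nra.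
Qed.

Lemma chernoff_upper_exponent (R : realFieldType) (shi dl u L : R) :
  0 < shi -> 0 < dl -> 0 < u -> u <= 1 / 2 -> u * (5 * shi + dl) <= dl ->
  0 <= L -> u <= L * (1 + u) ->
  shi * (u + u ^+ 2) - (shi + dl) * L + u * dl / 2 <= 0.
Proof.
move=> shi_gt0 dl_gt0 u_gt0 u_le uhi L_ge0 u_le_L.
have u2_le : u ^+ 2 <= u / 2 by rewrite expr2; nra.
have excess_ge0 : 0 <= (shi + dl) * (L * (1 + u) - u) by apply: mulr_ge0; lra.
have slack : shi * (2 * u + u ^+ 2) + dl * u / 2 <= dl / 2 by nra.
suff : (shi * (u + u ^+ 2) - (shi + dl) * L + u * dl / 2) * (1 + u) <= 0 by nra.
have -> : (shi * (u + u ^+ 2) - (shi + dl) * L + u * dl / 2) * (1 + u) =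
    u * (shi * (2 * u + u ^+ 2) + dl * u / 2 - dl / 2) - (shi + dl) * (L * (1 + u) - u).
  by field.
have : u * (shi * (2 * u + u ^+ 2) + dl * u / 2 - dl / 2) <= 0 by apply: mulr_ge0_le0; lra.
lra.
Qed.

Lemma chernoff_lower_exponent (R : realFieldType) (slo dl u L : R) :
  0 < slo -> 0 < dl -> dl <= slo -> 0 < u -> 4 * u * slo <= dl ->
  0 <= L -> L <= u ->
  - slo * (u - 2 * u ^+ 2) + (slo - dl) * L + u * dl / 2 <= 0.
Proof.
move=> slo_gt0 dl_gt0 dl_le u_gt0 ulo L_ge0 L_le_u.
have : (slo - dl) * L <= (slo - dl) * u by apply: ler_wpM2l; lra.
have -> : - slo * (u - 2 * u ^+ 2) + (slo - dl) * L + u * dl / 2 =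
    u * (2 * u * slo - dl / 2) + (slo - dl) * (L - u) by field.
have : u * (2 * u * slo - dl / 2) <= 0 by apply: mulr_ge0_le0; lra.
nra.
Qed.

Section chernoff.
Variables (R : realType) (n : nat) (p : 'I_n -> 'I_n -> R) (w : 'I_n -> 'I_n -> nat).
Variables (N : nat) (r slo shi dl u : R).
Hypotheses (p_bounds : forall i j, r * slo <= p i j <= r * shi)
  (p_le1 : forall i j, p i j <= 1).
Hypotheses (w_le2 : forall i j, (w i j <= 2)%N)
  (w_sum : (\sum_(i < n) \sum_(j < n | (i < j)%N) w i j)%N = N).
Hypotheses (r_gt0 : 0 < r) (slo_gt0 : 0 < slo) (slo_le_shi : slo <= shi)
  (dl_gt0 : 0 < dl) (dl_le_slo : dl <= slo).
Hypothesis rate : chernoff_rate slo shi dl u.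

Definition weighted_edges (M : 'M[bool]_n) : nat :=
  (\sum_(i < n) \sum_(j < n | (i < j)%N) w i j * M i j)%N.

Definition upper_tail_weight M :=
  expR (((weighted_edges M)%:R - r * N%:R * (shi + dl)) * ln (1 + u)).

Definition lower_tail_weight M :=
  expR ((r * N%:R * (slo - dl) - (weighted_edges M)%:R) * ln (1 + u)).

Definition tail_weight M := upper_tail_weight M + lower_tail_weight M.

Lemma edge_prob01 i j : 0 <= p i j <= 1.
Proof.
have /andP[p_ge _] := p_bounds i j; rewrite p_le1 andbT (le_trans _ p_ge) //.
by rewrite mulr_ge0 // ltW.
Qed.

Lemma weight_sumE :
  (N%:R : R) = \sum_(i < n) \sum_(j < n) (if (i < j)%N then (w i j)%:R else 0).
Proof.
by rewrite -w_sum natr_sum; apply: eq_bigr => i _; rewrite natr_sum big_mkcond.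
Qed.

Lemma upper_tail_weight_mean_le :
  \sum_M edge_pmf p M * upper_tail_weight M <= expR (- (r * N%:R * (u * dl / 2))).
Proof.
have [u_gt0 u_le uhi _] := rate; have [L_ge0 _ u_le_L] := ln1D_bounds u_gt0.
have weightE M : upper_tail_weight M
    = (1 + u) ^+ weighted_edges M * expR (- (r * N%:R * (shi + dl)) * ln (1 + u)).
  by rewrite /upper_tail_weight mulrBl expRD expRM_natl lnK ?posrE 1?mulNr //; lra.
under eq_bigr do rewrite weightE mulrA.
rewrite -big_distrl /=.
apply: le_trans (ler_wpM2r (expR_ge0 _) (edge_pmf_mgf_le w _ edge_prob01)) _.
  by lra.
rewrite -expRD ler_expR.
have mean_le : \sum_(i < n) \sum_(j < n)
      (if (i < j)%N then p i j * ((1 + u) ^+ w i j - 1) else 0)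
    <= r * shi * (u + u ^+ 2) * N%:R.
  rewrite weight_sumE mulr_sumr; apply: ler_sum => i _.
  rewrite mulr_sumr; apply: ler_sum => j _.
  case: ifP => _; last by rewrite mulr0.
  have /andP[p_ge0 _] := edge_prob01 i j; have /andP[_ p_le] := p_bounds i j.
  apply: le_trans (ler_wpM2l p_ge0 (expr1D_sub1_le (ltW u_gt0) (w_le2 i j))) _.
  rewrite [leRHS](_ : _ = r * shi * ((w i j)%:R * (u + u ^+ 2))); last by ring.
  apply: ler_wpM2r => //.
  by apply: mulr_ge0; [exact: ler0n | apply: addr_ge0; [exact: ltW | exact: sqr_ge0]].
have rN_ge0 : 0 <= r * N%:R by rewrite mulr_ge0 ?ler0n ?ltW.
have := mulr_ge0_le0 rN_ge0 (chernoff_upper_exponent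
  (lt_le_trans slo_gt0 slo_le_shi) dl_gt0 u_gt0 u_le uhi L_ge0 u_le_L).
have -> : r * N%:R * (shi * (u + u ^+ 2) - (shi + dl) * ln (1 + u) + u * dl / 2) =
    r * shi * (u + u ^+ 2) * N%:R - r * N%:R * (shi + dl) * ln (1 + u)
    + r * N%:R * (u * dl / 2) by ring.
lra.
Qed.

Lemma lower_tail_weight_mean_le :
  \sum_M edge_pmf p M * lower_tail_weight M <= expR (- (r * N%:R * (u * dl / 2))).
Proof.
have [u_gt0 _ _ ulo] := rate; have [L_ge0 L_le_u _] := ln1D_bounds u_gt0.
have weightE M : lower_tail_weight M
    = (1 + u)^-1 ^+ weighted_edges M * expR (r * N%:R * (slo - dl) * ln (1 + u)).
  rewrite /lower_tail_weight mulrBl expRD mulrC; congr (_ * _).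
  by rewrite expRN expRM_natl lnK ?posrE ?exprVn //; lra.
under eq_bigr do rewrite weightE mulrA.
rewrite -big_distrl /=.
apply: le_trans (ler_wpM2r (expR_ge0 _) (edge_pmf_mgf_le w _ edge_prob01)) _.
  by rewrite invr_ge0; lra.
rewrite -expRD ler_expR.
have rate_le0 : - (u - 2 * u ^+ 2) <= 0.
  by rewrite oppr_le0 subr_ge0 expr2; have [_ u_le _ _] := rate; nra.
have mean_le : \sum_(i < n) \sum_(j < n)
      (if (i < j)%N then p i j * ((1 + u)^-1 ^+ w i j - 1) else 0)
    <= r * slo * (- (u - 2 * u ^+ 2)) * N%:R.
  rewrite weight_sumE mulr_sumr; apply: ler_sum => i _.
  rewrite mulr_sumr; apply: ler_sum => j _.
  case: ifP => _; last by rewrite mulr0.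
  have /andP[p_ge0 _] := edge_prob01 i j; have /andP[p_ge _] := p_bounds i j.
  apply: le_trans (ler_wpM2l p_ge0 (exprV1D_sub1_le (ltW u_gt0) (w_le2 i j))) _.
  rewrite [leRHS](_ : _ = r * slo * ((w i j)%:R * (- (u - 2 * u ^+ 2)))); last by ring.
  by apply: ler_wnM2r => //; apply: mulr_ge0_le0.
have rN_ge0 : 0 <= r * N%:R by rewrite mulr_ge0 ?ler0n ?ltW.
have := mulr_ge0_le0 rN_ge0
  (chernoff_lower_exponent slo_gt0 dl_gt0 dl_le_slo u_gt0 ulo L_ge0 L_le_u).
have -> : r * N%:R * (- slo * (u - 2 * u ^+ 2) + (slo - dl) * ln (1 + u) + u * dl / 2) =
    r * slo * (- (u - 2 * u ^+ 2)) * N%:R + r * N%:R * (slo - dl) * ln (1 + u)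
    + r * N%:R * (u * dl / 2) by ring.
lra.
Qed.

Lemma tail_weight_mean_le :
  \sum_M edge_pmf p M * tail_weight M <= 2 * expR (- (r * N%:R * (u * dl / 2))).
Proof.
under eq_bigr do rewrite mulrDr.
by rewrite big_split /= mulr_natl mulr2n; apply: lerD;
  [exact: upper_tail_weight_mean_le | exact: lower_tail_weight_mean_le].
Qed.

Lemma tail_weight_ge1 (M : 'M[bool]_n) : (0 < N)%N ->
  ~~ (slo - dl < (weighted_edges M)%:R / (r * N%:R) < shi + dl) ->
  1 <= tail_weight M.
Proof.
have [u_gt0 _ _ _] := rate; have [L_ge0 _ _] := ln1D_bounds u_gt0.
move=> N_gt0; have rN_gt0 : 0 < r * N%:R by rewrite mulr_gt0 // ltr0n.
rewrite negb_and -!leNgt => /orP[le_lo|ge_hi].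
- rewrite ler_pdivrMr // in le_lo.
  rewrite -[1]add0r; apply: lerD; first exact: expR_ge0.
  by rewrite -expR0 ler_expR; apply: mulr_ge0 => //; lra.
- rewrite ler_pdivlMr // in ge_hi.
  rewrite -[1]addr0; apply: lerD; last exact: expR_ge0.
  by rewrite -expR0 ler_expR; apply: mulr_ge0 => //; lra.
Qed.

End chernoff.

Definition balanced (R : realType) (n k : nat) (alpha : R) (e : {ffun 'I_n -> 'I_k}) :=
  [forall a, alpha * n%:R <= (ncount e a)%:R].

Definition densities_within (R : realType) (n k : nat) (rh lo hi : R) (M : 'M[bool]_n)
    (e : {ffun 'I_n -> 'I_k}) :=
  [forall a, forall b, lo < (ocount M e a b)%:R / (rh * (npair e a b)%:R) < hi].

Definition deviant_labelling_exists (R : realType) (n k : nat) (alpha rh lo hi : R)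
    (M : 'M[bool]_n) :=
  [exists e : {ffun 'I_n -> 'I_k}, balanced alpha e && ~~ densities_within rh lo hi M e].

Lemma not_deviant_densities_within (R : realType) (n k : nat) (alpha rh lo hi : R)
    (M : 'M[bool]_n) :
  ~~ deviant_labelling_exists k alpha rh lo hi M ->
  forall e : {ffun 'I_n -> 'I_k}, (forall a, alpha * n%:R <= (ncount e a)%:R) ->
  forall a b, lo < (ocount M e a b)%:R / (rh * (npair e a b)%:R) < hi.
Proof.
rewrite negb_exists => /forallP good e bal_e a b.
have /forallP/(_ a)/forallP/(_ b) // : densities_within rh lo hi M e.
by move: (good e); rewrite negb_and negbK => /orP[/negP []|//]; exact/forallP.
Qed.

Section sbm_union_bound.
Variables (R : realType) (n k : nat) (pi : 'I_k -> R) (S : 'I_k -> 'I_k -> R).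
Variables (rh smin smax alpha dl u : R).
Hypotheses (pi_ge0 : forall a, 0 <= pi a) (pi_sum1 : \sum_(a < k) pi a = 1).
Hypotheses (S_ge : forall a b, smin <= S a b) (S_le : forall a b, S a b <= smax).
Hypotheses (rh_gt0 : 0 < rh) (rhS_le1 : forall a b, rh * S a b <= 1).
Hypotheses (smin_gt0 : 0 < smin) (smin_le_smax : smin <= smax)
  (dl_gt0 : 0 < dl) (dl_le_smin : dl <= smin).
Hypothesis rate : chernoff_rate smin smax dl u.
Hypothesis alpha_n_ge2 : 2 <= alpha * n%:R.
Implicit Types (z e : {ffun 'I_n -> 'I_k}) (a b : 'I_k) (M : 'M[bool]_n).

Definition sbm_edge_prob z (i j : 'I_n) : R := rh * S (z i) (z j).

Lemma sbm_pmfE z M :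
  sbm_pmf pi rh S z M = (\prod_(i < n) pi (z i)) * edge_pmf (sbm_edge_prob z) M.
Proof. by []. Qed.

Lemma sbm_edge_prob_bounds z i j :
  rh * smin <= sbm_edge_prob z i j <= rh * smax.
Proof. by rewrite /sbm_edge_prob !ler_pM2l // S_ge S_le. Qed.

Lemma sbm_edge_prob01 z i j : 0 <= sbm_edge_prob z i j <= 1.
Proof.
rewrite rhS_le1 andbT; have /andP[le_p _] := sbm_edge_prob_bounds z i j.
by apply: le_trans le_p; rewrite mulr_ge0 ?ltW.
Qed.

Lemma sbm_pmf_ge0 z M : 0 <= sbm_pmf pi rh S z M.
Proof.
by rewrite sbm_pmfE mulr_ge0 ?prodr_ge0 ?edge_pmf_ge0 //; apply: sbm_edge_prob01.
Qed.

Lemma npair_balanced_ge e a b : balanced alpha e ->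
  (alpha * n%:R) ^+ 2 / 2 <= (npair e a b)%:R /\ (0 < npair e a b)%N.
Proof.
move=> /forallP bal_e; have na_ge := bal_e a; have nb_ge := bal_e b.
have na_ge2 : (2 <= ncount e a)%N by rewrite -(ler_nat R) (le_trans alpha_n_ge2).
have nb_ge2 : (2 <= ncount e b)%N by rewrite -(ler_nat R) (le_trans alpha_n_ge2).
rewrite /npair; case: eqP => [_|_].
  split; last by rewrite muln_gt0 -subn1 !subn_gt0 (ltnW na_ge2).
  rewrite natrM -subn1 natrB ?(ltnW na_ge2) //.
  move: na_ge alpha_n_ge2; set x := (ncount e a)%:R; set y := alpha * n%:R.
  by move=> *; nra.
split; last by rewrite muln_gt0 (ltnW na_ge2) (ltnW nb_ge2).
rewrite natrM; move: na_ge nb_ge alpha_n_ge2.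
set x := (ncount e a)%:R; set x' := (ncount e b)%:R; set y := alpha * n%:R.
by move=> *; nra.
Qed.

Definition block_tail_weight e a b M :=
  tail_weight (pair_weight e a b) (npair e a b) rh smin smax dl u M.

Definition sbm_tail_bound := 2 * expR (- (rh * ((alpha * n%:R) ^+ 2 / 2) * (u * dl / 2))).

Lemma block_tail_weight_mean_le e a b : balanced alpha e ->
  \sum_(zM : {ffun 'I_n -> 'I_k} * 'M[bool]_n)
    sbm_pmf pi rh S zM.1 zM.2 * block_tail_weight e a b zM.2 <= sbm_tail_bound.
Proof.
move=> bal_e; have [npair_ge _] := npair_balanced_ge a b bal_e.
pose B := 2 * expR (- (rh * (npair e a b)%:R * (u * dl / 2))).
have mean_le z : \sum_M edge_pmf (sbm_edge_prob z) M * block_tail_weight e a b M <= B.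
  apply: tail_weight_mean_le => //; first exact: sbm_edge_prob_bounds.
  - by move=> i j; have /andP[] := sbm_edge_prob01 z i j.
  - exact: pair_weight_le2.
  - exact: sum_pair_weight.
rewrite big_pairE /=.
apply: le_trans (_ : \sum_(z : {ffun 'I_n -> 'I_k}) (\prod_(i < n) pi (z i)) * B <= _).
  apply: ler_sum => z _.
  under eq_bigr do rewrite sbm_pmfE -mulrA.
  by rewrite -big_distrr /= ler_wpM2l ?prodr_ge0.
rewrite -big_distrl /=.
have -> : \sum_(z : {ffun 'I_n -> 'I_k}) \prod_(i < n) pi (z i) = 1.
  rewrite -(bigA_distr_bigA (fun (i : 'I_n) (a : 'I_k) => pi a)) /=.
  by apply: big1 => i _; exact: pi_sum1.
rewrite mul1r ler_wpM2l // ler_expR lerN2.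
have [u_gt0 _ _ _] := rate.
apply: ler_wpM2r; first by rewrite divr_ge0 ?mulr_ge0 ?ltW.
by rewrite ler_pM2l.
Qed.

Lemma tail_weight_term_ge0 (c : bool) z M e a b :
  0 <= c%:R * (sbm_pmf pi rh S z M * block_tail_weight e a b M).
Proof.
apply: mulr_ge0 => //; apply: mulr_ge0; first exact: sbm_pmf_ge0.
by rewrite addr_ge0 ?expR_ge0.
Qed.

Lemma sbm_pmf_le_tail_weights z M :
  deviant_labelling_exists k alpha rh (smin - dl) (smax + dl) M ->
  sbm_pmf pi rh S z M <= \sum_e \sum_a \sum_b
    (balanced alpha e)%:R * (sbm_pmf pi rh S z M * block_tail_weight e a b M).
Proof.
move=> /existsP[e /andP[bal_e /forallPn[a /forallPn[b dev_ab]]]].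
case adjM : (is_adjacency M); last first.
  rewrite {1}sbm_pmfE /edge_pmf adjM mulr0.
  by do 3 (apply: sumr_ge0 => ? _); exact: tail_weight_term_ge0.
have [_ npair_gt0] := npair_balanced_ge a b bal_e.
rewrite (ocount_upperE e a b adjM) in dev_ab.
have weight_ge1 := tail_weight_ge1 rh_gt0 rate npair_gt0 dev_ab.
rewrite (bigD1 e) //= (bigD1 a) //= (bigD1 b) //= bal_e mul1r -!addrA.
apply: le_trans (_ : sbm_pmf pi rh S z M * block_tail_weight e a b M <= _).
  by rewrite ler_peMr ?sbm_pmf_ge0.
rewrite lerDl !addr_ge0 //; do ?(apply: sumr_ge0 => ? _); exact: tail_weight_term_ge0.
Qed.

Lemma sum_labellings_blocks_const (B : R) :
  \sum_(e : {ffun 'I_n -> 'I_k}) \sum_(a < k) \sum_(b < k) B = (k ^ (n + 2))%:R * B.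
Proof.
rewrite !sumr_const !card_ord card_ffun !card_ord -!mulrnA [RHS]mulr_natl.
by rewrite addn2 !expnS.
Qed.

Lemma deviant_mass_le :
  \sum_(zM : {ffun 'I_n -> 'I_k} * 'M[bool]_n
         | deviant_labelling_exists k alpha rh (smin - dl) (smax + dl) zM.2)
    sbm_pmf pi rh S zM.1 zM.2 <= (k ^ (n + 2))%:R * sbm_tail_bound.
Proof.
rewrite -sum_labellings_blocks_const big_mkcond /=.
apply: le_trans (_ : \sum_(zM : {ffun 'I_n -> 'I_k} * 'M[bool]_n) \sum_e \sum_a \sum_b
    (balanced alpha e)%:R * (sbm_pmf pi rh S zM.1 zM.2 * block_tail_weight e a b zM.2)
    <= _).
  apply: ler_sum => -[z M] _ /=; case: ifP => [/sbm_pmf_le_tail_weights //|_].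
  by do 3 (apply: sumr_ge0 => ? _); exact: tail_weight_term_ge0.
rewrite exchange_big /=; apply: ler_sum => e _.
rewrite exchange_big /=; apply: ler_sum => a _.
rewrite exchange_big /=; apply: ler_sum => b _.
case: (boolP (balanced alpha e)) => [bal_e|_].
  by under eq_bigr do rewrite mul1r; exact: block_tail_weight_mean_le.
by rewrite big1 ?mulr_ge0 ?expR_ge0 // => zM _; rewrite mul0r.
Qed.

End sbm_union_bound.

(* [expR x >= (2k)^3] and [(2k)^(3n) >= (2k)^(n+2) = 2^(n+1) * (2 * k^(n+2))]. *)
Lemma pow_mul_expR_le_geometric (R : realType) (n k : nat) (x : R) :
  (0 < n)%N -> (0 < k)%N -> ((2 * k) ^ 3)%:R <= x ->
  (k ^ (n + 2))%:R * (2 * expR (- (n%:R * x))) <= 1 / (2 ^ n.+1)%:R.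
Proof.
move=> n_gt0 k_gt0 x_ge; set X := expR x.
have X_gt0 : 0 < X := expR_gt0 x.
have X_ge : ((2 * k) ^ 3)%:R <= X.
  by apply: le_trans x_ge (le_trans _ (expR_ge1Dx x)); rewrite lerDr.
have Xn_ge : ((2 * k) ^ (3 * n))%:R <= X ^+ n.
  by rewrite expnM natrX lerXn2r // nnegrE ?ler0n // ltW.
have card_le : (2 ^ n.+1 * (2 * k ^ (n + 2)) <= (2 * k) ^ (3 * n))%N.
  rewrite (_ : 2 ^ n.+1 * (2 * k ^ (n + 2)) = (2 * k) ^ (n + 2))%N; last first.
    by rewrite expnMn mulnA -expnSr addn2.
  by rewrite leq_pexp2l ?muln_gt0 ?k_gt0 // mulSn leq_add2l mulSn mul1n (leq_add n_gt0 n_gt0).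
rewrite expRN expRM_natl -/X ler_pdivlMr ?ltr0n ?expn_gt0 //.
rewrite (_ : _ * _ * _ = (2 ^ n.+1 * (2 * k ^ (n + 2)))%:R / X ^+ n); last first.
  by rewrite !natrM; field; rewrite expf_neq0 // gt_eqF.
rewrite ler_pdivrMr ?exprn_gt0 // mul1r.
by apply: le_trans Xn_ge; rewrite ler_nat.
Qed.

Section sbm_asymptotics.
Variables (R : realType) (k : nat) (pi : 'I_k -> R) (S : 'I_k -> 'I_k -> R).
Variables (rho : nat -> R) (smin smax alpha dl u : R).
Hypotheses (k_gt0 : (0 < k)%N) (pi_ge0 : forall a, 0 <= pi a)
  (pi_sum1 : \sum_(a < k) pi a = 1).
Hypotheses (S_ge : forall a b, smin <= S a b) (S_le : forall a b, S a b <= smax).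
Hypotheses (rho_gt0 : forall n, 0 < rho n) (rhoS_le1 : forall n a b, rho n * S a b <= 1).
Hypothesis nrho_oo : (fun n => n%:R * rho n) @ \oo --> +oo.
Hypotheses (smin_gt0 : 0 < smin) (smin_le_smax : smin <= smax)
  (dl_gt0 : 0 < dl) (dl_le_smin : dl <= smin).
Hypotheses (rate : chernoff_rate smin smax dl u) (alpha_gt0 : 0 < alpha).

Lemma deviant_mass_geometric : \forall n \near \oo,
  \sum_(zM : {ffun 'I_n -> 'I_k} * 'M[bool]_n
         | deviant_labelling_exists k alpha (rho n) (smin - dl) (smax + dl) zM.2)
    sbm_pmf pi (rho n) S zM.1 zM.2 <= 1 / (2 ^ n.+1)%:R.
Proof.
have [u_gt0 _ _ _] := rate.
pose c := alpha ^+ 2 * (u * dl / 2) / 2.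
have c_gt0 : 0 < c by rewrite /c !mulr_gt0 ?exprn_gt0 ?invr_gt0.
have nrho_ge : \forall n \near \oo, ((2 * k) ^ 3)%:R / c <= n%:R * rho n.
  by move/cvgryPge : nrho_oo; apply.
have n_ge : \forall n \near \oo, 2 / alpha <= n%:R := nbhs_infty_ger _.
near=> n.
have alpha_n_ge2 : 2 <= alpha * n%:R.
  by rewrite -ler_pdivrMl // mulrC; near: n; exact: n_ge.
have n_gt0 : (0 < n)%N.
  by rewrite lt0n; apply/eqP => n0; move: alpha_n_ge2; rewrite n0 mulr0; lra.
apply: le_trans (deviant_mass_le pi_ge0 pi_sum1 S_ge S_le (rho_gt0 n) (rhoS_le1 n)
  smin_gt0 smin_le_smax dl_gt0 dl_le_smin rate alpha_n_ge2) _.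
rewrite /sbm_tail_bound.
rewrite (_ : rho n * _ * _ = n%:R * (n%:R * rho n * c)); last by rewrite /c; ring.
apply: pow_mul_expR_le_geometric => //.
by rewrite -ler_pdivrMr //; near: n; exact: nrho_ge.
Unshelve. all: by end_near.
Qed.

End sbm_asymptotics.

Section finite_valued_maps.
Context d (T : measurableType d) (R : realType) (mu : {measure set T -> \bar R}).
Local Open Scope ereal_scope.

Lemma measure_bigsetU_le (I : Type) (r : seq I) (Q : pred I) (G : I -> set T) :
  (forall i, measurable (G i)) ->
  mu (\big[setU/set0]_(i <- r | Q i) G i) <= \sum_(i <- r | Q i) mu (G i).
Proof.
move=> G_meas; elim: r => [|i r IH]; first by rewrite !big_nil measure0.
rewrite !big_cons; case: (Q i) => //.
apply: le_trans (measureU2 _ _ _) _ => //; first exact: bigsetU_measurable.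
exact: leeD.
Qed.

Lemma preimage_bigsetU (V : finType) (X : T -> V) (Q : pred V) :
  [set w | Q (X w)] = \big[setU/set0]_(v | Q v) [set w | X w = v].
Proof.
rewrite -bigcup_seq_cond; apply/seteqP; split => [w /= QXw|w [v /= /andP[_ Qv] ->] //].
by exists (X w) => //=; rewrite mem_index_enum.
Qed.

Variables (V : finType) (X : T -> V).
Hypothesis fibre_meas : forall v, measurable [set w | X w = v].

Lemma measurable_preimage (Q : pred V) : measurable [set w | Q (X w)].
Proof. by rewrite preimage_bigsetU; apply: bigsetU_measurable. Qed.

Lemma measure_preimage_le (Q : pred V) :
  mu [set w | Q (X w)] <= \sum_(v | Q v) mu [set w | X w = v].
Proof. by rewrite preimage_bigsetU; apply: measure_bigsetU_le. Qed.

End finite_valued_maps.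

Lemma ae_eventually_not_geometric d (T : measurableType d) (R : realType)
    (mu : {measure set T -> \bar R}) (F : (set T)^nat) :
  (forall n, measurable (F n)) ->
  (\forall n \near \oo, mu (F n) <= (1 / (2 ^ n.+1)%:R)%:E)%E ->
  {ae mu, forall w, \forall n \near \oo, ~ F n w}.
Proof.
move=> F_meas [N _ F_le].
pose G n := if (N <= n)%N then F n else set0.
have G_meas n : measurable (G n) by rewrite /G; case: ifP.
have G_summable : (\sum_(0 <= n <oo) mu (G n) < +oo)%E.
  apply: le_lt_trans (ltry 1); apply: le_trans (epsilon_trick0 xpredT ler01).
  apply: lee_nneseries => // n _; rewrite /G; case: ifP => [N_le|_]; first exact: F_le.
  by rewrite measure0 lee_fin divr_ge0.
exists (lim_sup_set G); split.
- by apply: bigcapT_measurable => m; apply: bigcup_measurable => j _.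
- exact: lim_sup_set_cvg0.
move=> w /= not_ev m _; apply: contrapT => no_G; apply: not_ev.
exists (maxn m N) => // j /=; rewrite geq_max => /andP[m_le N_le] Fj.
by apply: no_G; exists j => //; rewrite /G N_le.
Qed.

Theorem corollary1
  (R : realType) (d : measure_display) (T : measurableType d) (P : probability T R)
  (k : nat) (pi : 'I_k -> R) (S : 'I_k -> 'I_k -> R) (rho : nat -> R)
  (smin smax alpha delta : R)
  (Z : forall n : nat, T -> {ffun 'I_n -> 'I_k})
  (A : forall n : nat, T -> 'M[bool]_n) :
  (2 <= k)%N ->
  (forall a, 0 < pi a) -> \sum_(a < k) pi a = 1 ->
  (forall a b, S a b = S b a) -> (forall a b, 0 < S a b) ->
  (forall a b, a != b -> exists c, S c a != S c b) ->
  is_min_entry S smin -> is_max_entry S smax ->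
  (forall n, 0 < rho n) -> (forall n a b, rho n * S a b <= 1) ->
  rho @ \oo --> 0 ->
  (fun n => n%:R * rho n) @ \oo --> +oo ->
  (forall n (z : {ffun 'I_n -> 'I_k}) (M : 'M[bool]_n),
     measurable [set w | Z n w = z /\ A n w = M] /\
     P [set w | Z n w = z /\ A n w = M] = (sbm_pmf pi (rho n) S z M)%:E) ->
  0 < alpha -> 0 < delta -> delta < smin / 2 ->
  (\forall n \near \oo, n%:R * rho n > 4 * smax / (alpha ^+ 2 * delta ^+ 2)) ->
  {ae P, forall w,
     \forall n \near \oo,
       forall e : {ffun 'I_n -> 'I_k},
         (forall a, alpha * n%:R <= (ncount e a)%:R) ->
         forall a b,
           smin - delta < (ocount (A n w) e a b)%:R / (rho n * (npair e a b)%:R) < smax + delta}.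
Proof.
move=> k_ge2 pi_gt0 pi_sum1 _ S_gt0 _ [S_ge [a0 [b0 S_min]]] [S_le _] rho_gt0 rhoS_le1 _
  nrho_oo sbm_law alpha_gt0 delta_gt0 delta_lt _.
have smin_gt0 : 0 < smin by rewrite -S_min.
have smin_le_smax : smin <= smax := le_trans (S_ge a0 b0) (S_le a0 b0).
have delta_le_smin : delta <= smin by lra.
have [u rate] := chernoff_rate_exists smin_gt0 smin_le_smax delta_gt0.
have fibreE n z M : [set w | (Z n w, A n w) = (z, M)] = [set w | Z n w = z /\ A n w = M].
  by apply/seteqP; split => w /= [-> ->].
have fibre_meas n (zM : {ffun 'I_n -> 'I_k} * 'M[bool]_n) :
    measurable [set w | (Z n w, A n w) = zM].
  by case: zM => z M; rewrite fibreE; exact: (sbm_law n z M).1.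
pose deviant n (zM : {ffun 'I_n -> 'I_k} * 'M[bool]_n) :=
  deviant_labelling_exists k alpha (rho n) (smin - delta) (smax + delta) zM.2.
have : {ae P, forall w, \forall n \near \oo, ~ deviant n (Z n w, A n w)}.
  apply: (ae_eventually_not_geometric (F := fun n => [set w | deviant n (Z n w, A n w)])).
    by move=> n; exact: (measurable_preimage (fibre_meas n) (deviant n)).
  have := deviant_mass_geometric (ltnW k_ge2) (fun a => ltW (pi_gt0 a)) pi_sum1 S_ge S_le
    rho_gt0 rhoS_le1 nrho_oo smin_gt0 smin_le_smax delta_gt0 delta_le_smin rate alpha_gt0.
  apply: filterS => n mass_le; apply: le_trans (measure_preimage_le P (fibre_meas n) (deviant n)) _.
  rewrite (eq_bigr (fun zM => (sbm_pmf pi (rho n) S zM.1 zM.2)%:E)) ?sumEFin ?lee_fin //.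
  by move=> [z M] _; rewrite fibreE; exact: (sbm_law n z M).2.
by apply: filterS => w; apply: filterS => n /negP; exact: not_deviant_densities_within.
Qed.
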